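(* Let $G$ be a group and $N\trianglelefteq G$ a solvable normal subgroup of derived length $d$ and finite exponent. (i) If $\exp(N)$ is odd, then $\exp(N\otimes G)$ divides $(\exp(N))^d$; in particular $\exp(M(G,N))$ divides $(\exp(N))^d$. (ii) If $\exp(N)$ is even, then $\exp(N\otimes G)$ divides $2^d(\exp(N))^d$; in particular $\exp(M(G,N))$ divides $2^d(\exp(N))^d$.
   Context: Conventions: ${}^g h = ghg^{-1}$, $[g,h]=ghg^{-1}h^{-1}$. $N\otimes G$ is generated by symbols $x\otimes g$ ($x\in N$, $g\in G$) subject to $xx'\otimes g=({}^x x'\otimes {}^x g)(x\otimes g)$ and $x\otimes gg'=(x\otimes g)({}^g x\otimes {}^g g')$; $N\wedge G$ is its quotient by the subgroup generated by all $x\otimes x$, $x\in N$. The relative Schur multiplier $M(G,N)$ is the kernel of the homomorphism $N\wedge G\to G$, $x\wedge g\mapsto [x,g]$. *)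

From HB Require Import structures.
From mathcomp Require Import all_boot monoid.

Set Implicit Arguments.
Unset Strict Implicit.
Unset Printing Implicit Defensive.

Local Open Scope group_scope.

Section Defs.
Variable G : groupType.

(* Paper's conventions: ^g h = g h g^-1 and [g,h] = g h g^-1 h^-1. *)
Definition lconj (g h : G) : G := g * h * g^-1.
Definition lcomm (g h : G) : G := g * h * g^-1 * h^-1.

Definition is_normal_subgroup (N : G -> Prop) : Prop :=
  [/\ N 1,
      (forall x y, N x -> N y -> N (x * y)),
      (forall x, N x -> N x^-1) &
      (forall g x, N x -> N (lconj g x))].

Inductive gen_subgroup (S : G -> Prop) : G -> Prop :=
| gs_one : gen_subgroup S 1
| gs_in x : S x -> gen_subgroup S x
| gs_mul x y : gen_subgroup S x -> gen_subgroup S y -> gen_subgroup S (x * y)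
| gs_inv x : gen_subgroup S x -> gen_subgroup S x^-1.

Definition comm_subgroup (H : G -> Prop) : G -> Prop :=
  gen_subgroup (fun z => exists a b, [/\ H a, H b & z = lcomm a b]).

Fixpoint derived (N : G -> Prop) (k : nat) : G -> Prop :=
  if k is k'.+1 then comm_subgroup (derived N k') else N.

Definition derived_length (N : G -> Prop) (d : nat) : Prop :=
  (forall x, derived N d x -> x = 1) /\
  (forall k, k < d -> exists x, derived N k x /\ x <> 1).

Definition exponent_is (N : G -> Prop) (e : nat) : Prop :=
  [/\ 0 < e,
      (forall x, N x -> x ^+ e = 1) &
      (forall k, 0 < k -> (forall x, N x -> x ^+ k = 1) -> e <= k)].

(* Words in the symbols x (x) g and their inverses: a letter (b, x, g)
   stands for (x (x) g) if b = false and (x (x) g)^-1 if b = true. *)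
Definition letter := (bool * G * G)%type.
Definition word := seq letter.
Definition flip (l : letter) : letter := (~~ l.1.1, l.1.2, l.2).
Definition sym (x g : G) : letter := (false, x, g).

Definition N_word (N : G -> Prop) (w : word) : Prop :=
  forall l, l \in w -> N l.1.2.

(* The defining congruence of N (x) G (wedge = false) and of N /\ G
   (wedge = true, additionally x (x) x = 1): the smallest congruence on
   words containing the free-group cancellations and the defining relations. *)
Inductive tens_eq (N : G -> Prop) (wedge : bool) : word -> word -> Prop :=
| te_refl w : tens_eq N wedge w w
| te_sym w1 w2 : tens_eq N wedge w1 w2 -> tens_eq N wedge w2 w1
| te_trans w1 w2 w3 :
    tens_eq N wedge w1 w2 -> tens_eq N wedge w2 w3 -> tens_eq N wedge w1 w3
| te_cat u u' v v' :
    tens_eq N wedge u u' -> tens_eq N wedge v v' ->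
    tens_eq N wedge (u ++ v) (u' ++ v')
| te_cancel l : tens_eq N wedge [:: l; flip l] [::]
| te_rel1 x x' g : N x -> N x' ->
    tens_eq N wedge [:: sym (x * x') g]
                    [:: sym (lconj x x') (lconj x g); sym x g]
| te_rel2 x g g' : N x ->
    tens_eq N wedge [:: sym x (g * g')]
                    [:: sym x g; sym (lconj g x) (lconj g g')]
| te_wedge x : wedge -> N x -> tens_eq N wedge [:: sym x x] [::].

Definition word_pow (w : word) (m : nat) : word := flatten (nseq m w).

Definition tensor_exp_dvd (N : G -> Prop) (m : nat) : Prop :=
  forall w, N_word N w -> tens_eq N false (word_pow w m) [::].

(* The commutator map N /\ G -> G, x /\ g |-> [x,g], on words. *)
Definition comm_eval (w : word) : G :=
  foldr (fun l acc => (if l.1.1 then (lcomm l.1.2 l.2)^-1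
                       else lcomm l.1.2 l.2) * acc) 1 w.

(* exp(M(G,N)) divides m, where M(G,N) = ker (N /\ G -> G). *)
Definition rel_schur_exp_dvd (N : G -> Prop) (m : nat) : Prop :=
  forall w, N_word N w -> comm_eval w = 1 ->
    tens_eq N true (word_pow w m) [::].

End Defs.

(* Let t be any map N × G → H obeying the two defining relations of
   N ⊗ G.  Conjugation by t x g acts on the values t y h as the commutator
   [x, g] acts on G.  Let A = N^(k), B = N^(k+1), and suppose t kills every
   x ⊗ g with x or g in B.  Then the subgroup generated by the t x g with
   x or g in A has commutators that commute with all values of t, so
   (s v)^n = s^n v^n [v, s]^(n choose 2) there.  For a generator,
   (t a g)^n = t (a^n) g * z^(n choose 2) with z = t [a, g] a central and
   z^e = 1 (symmetrically in the second variable); hence, with c = e for odd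
   e and c = 2e for even e, every element of that subgroup has c-th power 1.
   In N ⊗ G modulo the letters with an entry in N^(k+1), this says that the
   c-th power of a word in letters with an entry in N^(k) equals a word in
   letters with an entry in N^(k+1).  After d steps every letter is trivial,
   so exp(N ⊗ G) divides c^d; the bound for M(G, N) follows because N ∧ G
   is a quotient of N ⊗ G. *)

From HB Require Import structures.
From mathcomp Require Import all_boot monoid boolp.

Set Implicit Arguments.
Unset Strict Implicit.
Unset Printing Implicit Defensive.

Local Open Scope group_scope.

Ltac group_simpl := rewrite /lconj /lcomm /commg /conjg ?invgM ?invgK -?mulgA;
  do ?(rewrite ?mulKg ?mulVKg ?mulgV ?mulVg ?mulg1 ?mul1g ?invg1 -?mulgA).

Section LeftConjugation.
Variable G : groupType.
Implicit Types a b x y g h k : G.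

Lemma lconj1g x : lconj 1 x = x. Proof. by group_simpl. Qed.
Lemma lconjg1 g : lconj g 1 = 1. Proof. by group_simpl. Qed.
Lemma lconjMg g h x : lconj (g * h) x = lconj g (lconj h x).
Proof. by rewrite /lconj invgM !mulgA. Qed.
Lemma lconjgM g x y : lconj g (x * y) = lconj g x * lconj g y.
Proof. by group_simpl. Qed.
Lemma lconjgV g x : lconj g x^-1 = (lconj g x)^-1.
Proof. by rewrite /lconj !invgM invgK !mulgA. Qed.
Lemma lconjKV g x : lconj g (lconj g^-1 x) = x.
Proof. by rewrite -lconjMg mulgV lconj1g. Qed.
Lemma lconjgg g : lconj g g = g. Proof. by rewrite /lconj mulgK. Qed.
Lemma lconj_commute g x : commute g x -> lconj g x = x.
Proof. by move=> gx; rewrite /lconj gx mulgK. Qed.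
Lemma lconjgX g n : lconj g (g ^+ n) = g ^+ n.
Proof. exact/lconj_commute/commuteX. Qed.
Lemma lconjJ a b y : lconj (lconj a b) (lconj a y) = lconj (a * b) y.
Proof. by rewrite -!lconjMg {2}/lconj mulgVK. Qed.

Lemma lcommE x g : lcomm x g = x * g * (g * x)^-1.
Proof. by rewrite /lcomm invgM !mulgA. Qed.
Lemma lcomm1g g : lcomm 1 g = 1. Proof. by group_simpl. Qed.
Lemma lcommg1 g : lcomm g 1 = 1. Proof. by group_simpl. Qed.
Lemma lcommMg a b g : lcomm (a * b) g = lconj a (lcomm b g) * lcomm a g.
Proof. by group_simpl. Qed.
Lemma lcommgM x g h : lcomm x (g * h) = lcomm x g * lconj g (lcomm x h).
Proof. by group_simpl. Qed.
Lemma lconj_lcomm k a b : lconj k (lcomm a b) = lcomm (lconj k a) (lconj k b).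
Proof. by rewrite /lcomm !lconjgM !lconjgV. Qed.

End LeftConjugation.

Section NormalSubgroup.
Variables (G : groupType) (N : G -> Prop).
Hypothesis nN : is_normal_subgroup N.

Lemma normal1 : N 1. Proof. by case: nN. Qed.
Lemma normalM x y : N x -> N y -> N (x * y). Proof. by case: nN => _ + _ _; apply. Qed.
Lemma normalV x : N x -> N x^-1. Proof. by case: nN => _ _ + _; apply. Qed.
Lemma normalJ g x : N x -> N (lconj g x). Proof. by case: nN => _ _ _; apply. Qed.

Lemma normalX x n : N x -> N (x ^+ n).
Proof. by move=> Nx; elim: n => [|n IH]; [exact: normal1|rewrite expgS; apply: normalM]. Qed.

Lemma normal_lcomm x g : N x \/ N g -> N (lcomm x g).
Proof.
case=> [Nx|Ng].
  have -> : lcomm x g = x * lconj g x^-1 by group_simpl.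
  by apply: normalM => //; apply/normalJ/normalV.
have -> : lcomm x g = lconj x g * g^-1 by group_simpl.
by apply: normalM; [apply: normalJ|apply: normalV].
Qed.

End NormalSubgroup.

Section CommutatorPowers.
Variable H : groupType.
Implicit Types s v x y z : H.

Lemma conjg_commute z s : commute z s -> z ^ s = z.
Proof. by move=> zs; rewrite conjgE zs mulKg. Qed.

Lemma commMgJ x y v : [~ x * y, v] = [~ x, v] ^ y * [~ y, v].
Proof. by group_simpl. Qed.

Lemma commVgJ x v : [~ x^-1, v] = [~ x, v]^-1 ^ x^-1.
Proof. by group_simpl. Qed.

Section ClassTwo.
Variables x y : H.
Hypotheses (cx : commute [~ x, y] x) (cy : commute [~ x, y] y).

Let czx m : commute ([~ x, y] ^+ m) x := commuteX2 m 1 cx.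
Let czy m : commute ([~ x, y] ^+ m) y := commuteX2 m 1 cy.
Let conjg_class2 : x ^ y = x * [~ x, y].
Proof. by rewrite commgEl mulVKg. Qed.

Lemma conjgX_class2 n : x ^ (y ^+ n) = x * [~ x, y] ^+ n.
Proof.
elim: n => [|n IH]; first by rewrite conjg1 mulg1.
by rewrite expgSr conjgM IH conjMg (conjg_commute (czy n)) conjg_class2 -mulgA -expgS.
Qed.

Lemma commgX_class2 n : [~ x, y ^+ n] = [~ x, y] ^+ n.
Proof. by rewrite commgEl conjgX_class2 mulKg. Qed.

Lemma expgM_class2 n : (y * x) ^+ n = y ^+ n * x ^+ n * [~ x, y] ^+ 'C(n, 2).
Proof.
elim: n => [|n IH]; first by rewrite !mulg1.
have xny : x ^+ n * y = y * x ^+ n * [~ x, y] ^+ n.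
  by rewrite [LHS]conjgC conjXg conjg_class2 expgMn ?mulgA //; exact: commute_sym.
rewrite expgSr IH binS bin1 expgnDr !mulgA -(mulgA _ _ y) czy mulgA.
rewrite -(mulgA (y ^+ n)) xny !expgSr -!mulgA; do 3 congr (_ * _).
by rewrite mulgA -expgnDr czx addnC expgnDr.
Qed.
End ClassTwo.
End CommutatorPowers.

Lemma gen_subgroup_sub (G : groupType) (P Q : G -> Prop) u :
  (forall x, P x -> Q x) -> gen_subgroup P u -> gen_subgroup Q u.
Proof.
move=> PQ; elim=> {u} [|x /PQ|x y _ + _|x _]; last exact: gs_inv.
- exact: gs_one.
- exact: gs_in.
- exact: gs_mul.
Qed.

Definition double_if_even (e : nat) := if odd e then e else (2 * e)%N.

Section CrossedPairing.
Variables (G H : groupType) (N : G -> Prop) (t : G -> G -> H).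
Hypothesis nN : is_normal_subgroup N.
Hypothesis pairMl : forall x x' g, N x -> N x' ->
  t (x * x') g = t (lconj x x') (lconj x g) * t x g.
Hypothesis pairMr : forall x g g', N x ->
  t x (g * g') = t x g * t (lconj g x) (lconj g g').

Let N1 := normal1 nN.
Let NM := normalM nN.
Let NV := normalV nN.
Let NJ := normalJ nN.

Lemma pair1g g : t 1 g = 1.
Proof.
have := pairMl g N1 N1; rewrite mulg1 !lconj1g => e.
by apply: (mulgI (t 1 g)); rewrite mulg1 -e.
Qed.

Lemma pairg1 x : N x -> t x 1 = 1.
Proof.
move=> Nx; have := pairMr 1 1 Nx; rewrite mulg1 !lconj1g => e.
by apply: (mulgI (t x 1)); rewrite mulg1 -e.
Qed.

Lemma pairVl x g : N x -> t x^-1 (lconj x g) = (t x g)^-1.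
Proof.
move=> Nx; have := pairMl g Nx (NV Nx).
rewrite mulgV pair1g lconjgV lconjgg => /esym/mulg1_eq <-.
by rewrite invgK.
Qed.

Lemma pairVr x k : N x -> t (lconj k x) k^-1 = (t x k)^-1.
Proof.
move=> Nx; have := pairMr k k^-1 Nx.
by rewrite mulgV pairg1 // lconjgV lconjgg => /esym/mulg1_eq <-.
Qed.

(* Expand t (x * x') (g * g') with pairMl first and with pairMr first. *)
Lemma pair_conj x g y h : N x -> N y ->
  t x g * t y h = t (lconj (lcomm x g) y) (lconj (lcomm x g) h) * t x g.
Proof.
move=> Nx Ny; have [x' Nx' ->] : exists2 x', N x' & y = lconj (g * x) x'.
  by exists (lconj (g * x)^-1 y); [apply: NJ|rewrite lconjKV].
rewrite -[h](lconjKV (g * x)); move: (lconj _ h) => g'.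
rewrite lcommE -!lconjMg mulgVK.
have := pairMl (g * g') Nx Nx'.
rewrite lconjgM (pairMr _ _ (NJ x Nx')) (pairMr _ _ Nx).
rewrite (pairMr _ _ (NM Nx Nx')) (pairMl _ Nx Nx') lconjgM.
rewrite (pairMl _ (NJ g Nx) (NJ g Nx')) !lconjJ.
rewrite -!mulgA => /mulgI.
by rewrite !mulgA => /mulIg.
Qed.

Lemma pair_factor x k h : N x ->
  t x h = t x k * t (lconj k x) h * (t (lconj h x) (lconj h k))^-1.
Proof.
move=> Nx; have := pairMr k (k^-1 * h) Nx; rewrite mulVKg => ->.
have -> : lconj k (k^-1 * h) = h * k^-1 by group_simpl.
rewrite (pairMr _ _ (NJ k Nx)) -!mulgA; congr (_ * (_ * _)).
by rewrite lconjgV -lconjMg -lconjJ pairVr //; apply: NJ.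
Qed.

Lemma pair_lcomm x k h : N x ->
  t (lcomm x k) h = t x k * (t (lconj h x) (lconj h k))^-1.
Proof.
move=> Nx; set x'' := lconj (x * k) x.
have Nx'' : N x'' by apply: NJ.
have -> : lcomm x k = x * lconj k x^-1 by group_simpl.
rewrite pairMl //; last by rewrite lconjgV; apply/NV/NJ.
have -> : lconj x (lconj k x^-1) = x''^-1 by rewrite /x'' -lconjgV lconjMg.
have -> : lconj x h = lconj x'' (lconj (lcomm x k) h).
  by rewrite -lconjMg /x''; group_simpl.
rewrite pairVl //.
have -> : x'' = lconj (lcomm x k) (lconj k x) by rewrite -lconjMg /x''; group_simpl.
have -> : t (lconj (lcomm x k) (lconj k x)) (lconj (lcomm x k) h) =
          t x k * t (lconj k x) h * (t x k)^-1.
  by rewrite pair_conj ?mulgK //; apply: NJ.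
by rewrite [t x h](pair_factor k) // !invgM invgK !mulgA !mulgVK.
Qed.

Definition is_pair (s : H) := exists x g, N x /\ s = t x g.
Definition pair_central (z : H) := forall x g, N x -> commute z (t x g).

Lemma pair_central_commute z u :
  pair_central z -> gen_subgroup is_pair u -> commute z u.
Proof.
move=> Zz; elim=> {u} [|_ [x [g [Nx ->]]]|u v _ zu _ zv|u _ zu].
- exact: commute1.
- exact: Zz.
- exact: commuteM.
- exact: commuteV.
Qed.

Lemma pair_central1 : pair_central 1.
Proof. by move=> x g _; apply/commute_sym/commute1. Qed.

Lemma pair_centralM z z' : pair_central z -> pair_central z' -> pair_central (z * z').
Proof.
move=> Zz Zz' x g Nx; apply/commute_sym/commuteM; apply/commute_sym.
  exact: Zz.
exact: Zz'.
Qed.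

Lemma pair_centralV z : pair_central z -> pair_central z^-1.
Proof. by move=> Zz x g Nx; apply/commute_sym/commuteV/commute_sym/Zz. Qed.

Lemma pair_centralX z n : pair_central z -> pair_central (z ^+ n).
Proof.
move=> Zz; elim: n => [|n IH]; first exact: pair_central1.
by rewrite expgS; apply: pair_centralM.
Qed.

Section Killed.
Variable B : G -> Prop.
Hypothesis BN : forall x, B x -> N x.
Hypothesis pair_killed : forall x g, N x -> B x \/ B g -> t x g = 1.

Lemma pairJ_killed c y h : B c -> N y -> t (lconj c y) (lconj c h) = t y h.
Proof.
move=> Bc Ny; have Nc := BN Bc.
have tc g : t c g = 1 by apply: pair_killed => //; left.
have := pairMl h Nc Ny; rewrite tc mulg1 => <-.
have := pairMl h Ny (NJ y^-1 Nc); rewrite lconjKV tc mul1g => <-.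
by congr (t _ h); group_simpl.
Qed.

Lemma pairJ_killed_lcomm k y h :
  N y -> B (lcomm y h) -> t (lconj k y) (lconj k h) = t y h.
Proof.
move=> Ny Byh; have := pair_lcomm h k Ny.
rewrite pair_killed; [|exact: BN|by left].
by move/esym/mulg1_eq/invg_inj ->.
Qed.

Lemma pair_central_killed_lcomm y h : N y -> B (lcomm y h) -> pair_central (t y h).
Proof. by move=> Ny Byh y' h' Ny'; rewrite /commute pair_conj // pairJ_killed. Qed.

Section Exponent.
Variables (A : G -> Prop) (e : nat).
Hypothesis nA : is_normal_subgroup A.
Hypothesis AN : forall x, A x -> N x.
Hypothesis lcommA : forall a b, A a -> A b -> B (lcomm a b).
Hypothesis expA : forall a, A a -> a ^+ e = 1.

Let A_lcomm := normal_lcomm nA.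

Let pair_central_lcomm x g y : N x -> A x \/ A g -> A y ->
  pair_central (t (lcomm x g) y).
Proof.
move=> Nx Axg Ay; have Ac := A_lcomm Axg.
by apply: pair_central_killed_lcomm; [exact: AN|exact: lcommA].
Qed.

Lemma pair_lcommXl a g n : A a -> t (lcomm (a ^+ n) g) a = t (lcomm a g) a ^+ n.
Proof.
move=> Aa; have Ac : A (lcomm a g) by apply: A_lcomm; left.
elim: n => [|n IH]; first by rewrite lcomm1g pair1g.
have An : A (lcomm (a ^+ n) g) by apply: A_lcomm; left; apply: normalX.
rewrite expgS lcommMg pairMl; [|exact/NJ/AN|exact: AN].
rewrite pairJ_killed_lcomm; [|exact: AN|exact: lcommA].
have := pairJ_killed_lcomm a (AN An) (lcommA An Aa).
by rewrite lconjgg => ->; rewrite IH expgS.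
Qed.

Lemma pair_lcommXr x b n : N x -> A b -> t (lcomm x (b ^+ n)) b = t (lcomm x b) b ^+ n.
Proof.
move=> Nx Ab; have Ac : A (lcomm x b) by apply: A_lcomm; right.
elim: n => [|n IH]; first by rewrite lcommg1 pair1g.
have An : A (lcomm x (b ^+ n)) by apply: A_lcomm; right; apply: normalX.
rewrite expgS lcommgM pairMl; [|exact: AN|exact/NJ/AN].
rewrite pairJ_killed_lcomm; [|exact/NJ/AN|exact: lcommA (normalJ nA _ An) Ab].
have := pairJ_killed_lcomm b (AN An) (lcommA An Ab).
by rewrite lconjgg => ->; rewrite IH expgSr.
Qed.

Lemma pairXl a g n : A a ->
  t a g ^+ n = t (a ^+ n) g * t (lcomm a g) a ^+ 'C(n, 2).
Proof.
move=> Aa; have Na := AN Aa.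
have Zz : pair_central (t (lcomm a g) a) by apply: pair_central_lcomm => //; left.
elim: n => [|n IH]; first by rewrite pair1g mulg1.
have Nan : N (a ^+ n) := normalX nN n Na.
have e1 : t (a ^+ n) (lconj a g) = (t (lcomm a g) a ^+ n)^-1 * t (a ^+ n) g.
  by rewrite -pair_lcommXl // pair_lcomm // lconjgX invgM invgK mulgVK.
rewrite [t a g ^+ n.+1]expgSr IH [a ^+ n.+1]expgS (pairMl _ Na Nan) lconjgX e1.
rewrite binS bin1 expgnDr.
set z := t (lcomm a g) a; have Zn := pair_centralV (pair_centralX n Zz).
rewrite -[LHS]mulgA (pair_centralX 'C(n, 2) Zz g Na) mulgA.
rewrite (Zn _ _ Nan) -[_ * t a g]mulgA (Zn _ _ Na) mulgA -!mulgA.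
by rewrite [z ^+ _ * _](commuteX2 _ _ (commute_refl z)) mulKg.
Qed.

Lemma pairXr x b n : N x -> A b ->
  t x b ^+ n = t x (b ^+ n) * t (lcomm x b) b ^+ 'C(n, 2).
Proof.
move=> Nx Ab.
have Zw : pair_central (t (lcomm x b) b) by apply: pair_central_lcomm => //; right.
elim: n => [|n IH]; first by rewrite pairg1 // mulg1.
have e1 : t (lconj b x) (b ^+ n) = (t (lcomm x b) b ^+ n)^-1 * t x (b ^+ n).
  by rewrite -pair_lcommXr // pair_lcomm // lconjgX invgM invgK mulgVK.
rewrite [t x b ^+ n.+1]expgS IH [b ^+ n.+1]expgS (pairMr _ _ Nx) lconjgX e1.
rewrite binS bin1 expgnDr.
set w := t (lcomm x b) b; have Wn := pair_centralV (pair_centralX n Zw).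
rewrite (Wn _ _ Nx) -!mulgA; do 2 congr (_ * _).
by rewrite [w ^+ _ * _](commuteX2 _ _ (commute_refl w)) mulKg.
Qed.

Definition is_Apair s := exists x g, N x /\ (A x \/ A g) /\ s = t x g.

Lemma gen_Apair_pair u : gen_subgroup is_Apair u -> gen_subgroup is_pair u.
Proof. by apply: gen_subgroup_sub => _ [x [g [Nx [_ ->]]]]; exists x, g. Qed.

Lemma pair_central_comm_Apair s s' : is_Apair s -> is_Apair s' -> pair_central [~ s, s'].
Proof.
move=> [x [g [Nx [Axg ->]]]] [x' [g' [Nx' [Axg' ->]]]].
have Zq : pair_central (t (lcomm x g) (lcomm x' g')).
  by apply: pair_central_lcomm => //; apply: (normal_lcomm nA).
set q := t (lcomm x g) (lcomm x' g').
have E : t x g * t x' g' = q * (t x' g' * t x g).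
  have conj_pair : t (lconj (lcomm x' g') x) (lconj (lcomm x' g') g) =
           t x' g' * t x g * (t x' g')^-1 by rewrite pair_conj // mulgK.
  by rewrite /q pair_lcomm // conj_pair; group_simpl.
have cq : commute q (t x' g' * t x g).
  by apply: (pair_central_commute Zq); apply: gs_mul; apply: gs_in; [exists x', g'|exists x, g].
by rewrite /commg /conjg E cq; group_simpl.
Qed.

Lemma pair_central_comm_genl v u : (forall s, is_Apair s -> pair_central [~ s, v]) ->
  gen_subgroup is_Apair u -> pair_central [~ u, v].
Proof.
move=> Zv; elim=> {u} [|s /Zv //|u u' _ Zu Ku' Zu'|u Ku Zu].
- by rewrite comm1g; apply: pair_central1.
- rewrite commMgJ conjg_commute; first exact: pair_centralM.
  exact/(pair_central_commute Zu)/gen_Apair_pair.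
- rewrite commVgJ conjg_commute; first exact: pair_centralV.
  exact/(pair_central_commute (pair_centralV Zu))/gs_inv/gen_Apair_pair.
Qed.

Lemma pair_central_comm_gen u v :
  gen_subgroup is_Apair u -> gen_subgroup is_Apair v -> pair_central [~ u, v].
Proof.
move=> Ku Kv; apply: pair_central_comm_genl Ku => s As.
rewrite -invgR; apply/pair_centralV/(pair_central_comm_genl _ Kv) => s' As'.
exact: pair_central_comm_Apair.
Qed.

Local Notation c := (double_if_even e).

(* In a group of class two (s v)^c = s^c v^c [v, s]^'C(c, 2) and
   [v, s]^'C(c, 2) = [v, s^'C(c, 2)], so this property is closed under
   products. *)
Definition good_power s := s ^+ c = 1 /\ pair_central (s ^+ 'C(c, 2)).

Lemma good_power1 : good_power 1.
Proof. by split; rewrite expg1n //; apply: pair_central1. Qed.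

Lemma good_powerV s : good_power s -> good_power s^-1.
Proof.
by move=> [s1 Zs]; rewrite /good_power !expVgn s1 invg1; split=> //; apply: pair_centralV.
Qed.

Lemma good_powerM s v : gen_subgroup is_pair s -> gen_subgroup is_pair v ->
  pair_central [~ v, s] -> good_power s -> good_power v -> good_power (s * v).
Proof.
move=> Ts Tv Z [s1 Zs] [v1 Zv].
have cv := pair_central_commute Z Tv; have cs := pair_central_commute Z Ts.
rewrite /good_power !(expgM_class2 cv cs); split.
  rewrite s1 v1 !mul1g -(commgX_class2 cs); apply/eqP/commgP/commute_sym.
  exact: pair_central_commute Zs Tv.
by apply: pair_centralM; [apply: pair_centralM|apply: pair_centralX].
Qed.

(* For odd e, e divides 'C(e, 2); for even e only 2 'C(e, 2) = e (e - 1) is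
   a multiple of e, whence c = 2 e. *)
Lemma good_power_of z s :
  pair_central z -> s ^+ e = z ^+ 'C(e, 2) -> z ^+ e = 1 -> good_power s.
Proof.
move=> Zz se ze; rewrite /good_power /double_if_even; case: ifP => oe.
  rewrite bin2odd // !expgnA se bin2odd // !expgnA ze !expg1n.
  by split=> //; apply: pair_central1.
have e2 : ('C(e, 2) * 2 = e * e.-1)%N.
  by rewrite bin2 muln2 halfK oddM oe subn0.
split; first by rewrite mulnC expgnA se -expgnA e2 expgnA ze expg1n.
have -> : 'C(2 * e, 2) = (e * (2 * e).-1)%N by rewrite bin2 -mulnA mul2n doubleK.
by rewrite expgnA se -expgnA; apply: pair_centralX.
Qed.

Lemma good_power_Apair s : is_Apair s -> good_power s.
Proof.
move=> [x [g [Nx [[Ax|Ag] ->]]]].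
  apply: (good_power_of (z := t (lcomm x g) x)).
  - by apply: pair_central_lcomm => //; left.
  - by rewrite pairXl // expA // pair1g mul1g.
  - by rewrite -pair_lcommXl // expA // lcomm1g pair1g.
apply: (good_power_of (z := t (lcomm x g) g)).
- by apply: pair_central_lcomm => //; right.
- by rewrite pairXr // expA // pairg1 // mul1g.
- by rewrite -pair_lcommXr // expA // lcommg1 pair1g.
Qed.

Lemma good_power_gen u : gen_subgroup is_Apair u -> good_power u.
Proof.
elim=> {u} [|s /good_power_Apair //|u v Ku Gu Kv Gv|u _ /good_powerV //].
  exact: good_power1.
by apply: good_powerM => //; [apply: gen_Apair_pair..|apply: pair_central_comm_gen].
Qed.

Lemma gen_Apair_exponent u : gen_subgroup is_Apair u -> u ^+ c = 1.
Proof. by case/good_power_gen. Qed.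

End Exponent.
End Killed.
End CrossedPairing.

Section QuotientGroup.
Variables (T : Type) (mul : T -> T -> T) (one : T) (inv : T -> T).

Record group_congruence := GroupCongruence {
  congr_rel :> T -> T -> Prop;
  congr_refl u : congr_rel u u;
  congr_sym u v : congr_rel u v -> congr_rel v u;
  congr_trans u v w : congr_rel u v -> congr_rel v w -> congr_rel u w;
  congr_mul u u' v v' : congr_rel u u' -> congr_rel v v' ->
    congr_rel (mul u v) (mul u' v');
  congr_mulA u v w : congr_rel (mul u (mul v w)) (mul (mul u v) w);
  congr_mul1g u : congr_rel (mul one u) u;
  congr_mulg1 u : congr_rel (mul u one) u;
  congr_mulVg u : congr_rel (mul (inv u) u) one;
  congr_mulgV u : congr_rel (mul u (inv u)) one
}.

Definition congr_class (R : group_congruence) := {P : T -> Prop | exists w, P = R w}.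

End QuotientGroup.

HB.instance Definition _ T mul one inv (R : @group_congruence T mul one inv) :=
  gen_eqMixin (congr_class R).
HB.instance Definition _ T mul one inv (R : @group_congruence T mul one inv) :=
  gen_choiceMixin (congr_class R).

Section QuotientGroupTheory.
Variables (T : Type) (mul : T -> T -> T) (one : T) (inv : T -> T).
Variable R : group_congruence mul one inv.

Definition class_of (w : T) : congr_class R := exist _ (R w) (ex_intro _ w erefl).
Definition class_repr (q : congr_class R) : T := projT1 (cid (proj2_sig q)).

Lemma class_reprK q : class_of (class_repr q) = q.
Proof.
rewrite /class_of /class_repr; case: q => P RP /=.
case: (cid RP) => w /= eP; subst P.
by congr exist; apply: Prop_irrelevance.
Qed.

Lemma class_of_eq u v : class_of u = class_of v <-> R u v.
Proof.
split=> [/(congr1 sval) /= Ruv|Ruv].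
  by rewrite Ruv; apply: congr_refl.
rewrite /class_of; move: (ex_intro _ u _) (ex_intro _ v _).
have -> : R u = R v.
  apply: funext => w; apply: propext.
  by split=> Rw; [apply: congr_trans (congr_sym Ruv) Rw|apply: congr_trans Ruv Rw].
by move=> p1 p2; congr exist; apply: Prop_irrelevance.
Qed.

Lemma class_repr_rel u : R (class_repr (class_of u)) u.
Proof. by apply/class_of_eq; rewrite class_reprK. Qed.

Lemma class_ofP (q : congr_class R) : exists w, q = class_of w.
Proof. by exists (class_repr q); rewrite class_reprK. Qed.

Definition class_mul p q := class_of (mul (class_repr p) (class_repr q)).
Definition class_one := class_of one.
Definition class_inv q := class_of (inv (class_repr q)).

Lemma class_mulE u v : class_mul (class_of u) (class_of v) = class_of (mul u v).
Proof. by apply/class_of_eq; apply: congr_mul; apply: class_repr_rel. Qed.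

Lemma class_invE u : class_inv (class_of u) = class_of (inv u).
Proof.
apply/class_of_eq.
apply: congr_trans (congr_sym (congr_mul1g R _)) _.
apply: congr_trans (congr_mul (congr_sym (congr_mulVg R u)) (congr_refl R _)) _.
apply: congr_trans (congr_sym (congr_mulA R _ _ _)) _.
apply: congr_trans (congr_mul (congr_refl R _) (congr_mul (congr_sym (class_repr_rel u))
  (congr_refl R _))) _.
exact: congr_trans (congr_mul (congr_refl R _) (congr_mulgV R _)) (congr_mulg1 R _).
Qed.

Lemma class_mulA : associative class_mul.
Proof.
move=> p q r; case: (class_ofP p) (class_ofP q) (class_ofP r) => [u ->] [v ->] [w ->].
by rewrite !class_mulE; apply/class_of_eq/congr_mulA.
Qed.

Lemma class_mul1g : left_id class_one class_mul.
Proof.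
by move=> p; case: (class_ofP p) => u ->; rewrite class_mulE; apply/class_of_eq/congr_mul1g.
Qed.

Lemma class_mulg1 : right_id class_one class_mul.
Proof.
by move=> p; case: (class_ofP p) => u ->; rewrite class_mulE; apply/class_of_eq/congr_mulg1.
Qed.

Lemma class_mulVg : left_inverse class_one class_inv class_mul.
Proof.
move=> p; case: (class_ofP p) => u ->.
by rewrite class_invE class_mulE; apply/class_of_eq/congr_mulVg.
Qed.

Lemma class_mulgV : right_inverse class_one class_inv class_mul.
Proof.
move=> p; case: (class_ofP p) => u ->.
by rewrite class_invE class_mulE; apply/class_of_eq/congr_mulgV.
Qed.

End QuotientGroupTheory.

HB.instance Definition _ T mul one inv (R : @group_congruence T mul one inv) :=
  isGroup.Build (congr_class R) (@class_mulA T mul one inv R) (@class_mul1g T mul one inv R)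
    (@class_mulg1 T mul one inv R) (@class_mulVg T mul one inv R) (@class_mulgV T mul one inv R).

Section Words.
Variables (G : groupType) (N : G -> Prop).
Hypothesis nN : is_normal_subgroup N.
Implicit Types (u v w : word G) (l : letter G) (S : G -> G -> Prop).

Definition winv w : word G := rev (map (@flip G) w).

Lemma flipK : involutive (@flip G).
Proof. by case=> [[b x] g]; rewrite /flip /= negbK. Qed.

Lemma winvK : involutive winv.
Proof. by move=> w; rewrite /winv map_rev revK -map_comp map_id_in // => l _; apply: flipK. Qed.

Lemma tens_eq_catl b w u v : tens_eq N b u v -> tens_eq N b (w ++ u) (w ++ v).
Proof. by move=> h; apply: te_cat => //; apply: te_refl. Qed.

Lemma tens_eq_catr b w u v : tens_eq N b u v -> tens_eq N b (u ++ w) (v ++ w).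
Proof. by move=> h; apply: te_cat => //; apply: te_refl. Qed.

Lemma tens_eq_winvr b w : tens_eq N b (w ++ winv w) [::].
Proof.
elim: w => [|l w IH]; first exact: te_refl.
have -> : (l :: w) ++ winv (l :: w) = [:: l] ++ ((w ++ winv w) ++ [:: flip l]).
  by rewrite /= /winv /= rev_cons -cats1 !catA.
apply: te_trans (te_cancel _ _ l).
by apply: (tens_eq_catl _ (tens_eq_catr _ IH)).
Qed.

Lemma tens_eq_winvl b w : tens_eq N b (winv w ++ w) [::].
Proof. by have := tens_eq_winvr b (winv w); rewrite winvK. Qed.

Lemma tens_eq_wedge u v : tens_eq N false u v -> tens_eq N true u v.
Proof.
elim=> {u v} [w|||u u' v v' _ + _|l|x x' g|x g g'|x //].
- exact: te_refl.
- by move=> w1 w2 _; apply: te_sym.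
- by move=> w1 w2 w3 _ h1 _; apply: te_trans.
- exact: te_cat.
- exact: te_cancel.
- exact: te_rel1.
- exact: te_rel2.
Qed.

Lemma word_powS w n : word_pow w n.+1 = w ++ word_pow w n.
Proof. by []. Qed.

Lemma word_powD w m n : word_pow w (m + n) = word_pow w m ++ word_pow w n.
Proof. by elim: m => [|m IH] //; rewrite addSn !word_powS IH catA. Qed.

Lemma word_powM w m n : word_pow w (m * n) = word_pow (word_pow w m) n.
Proof. by elim: n => [|n IH]; rewrite ?muln0 // mulnS word_powD IH. Qed.

Lemma tens_eq_pow b u v n :
  tens_eq N b u v -> tens_eq N b (word_pow u n) (word_pow v n).
Proof. by move=> h; elim: n => [|n IH]; [apply: te_refl|apply: te_cat]. Qed.

Definition letters_in S w := forall l, l \in w -> S l.1.2 l.2.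

Lemma letters_in_nil S : letters_in S [::]. Proof. by []. Qed.

Lemma letters_in_cat S u v : letters_in S u -> letters_in S v -> letters_in S (u ++ v).
Proof. by move=> hu hv l; rewrite mem_cat => /orP [/hu|/hv]. Qed.

Lemma letters_in_cons S l w : letters_in S (l :: w) -> S l.1.2 l.2 /\ letters_in S w.
Proof. by move=> h; split=> [|l' w_l']; apply: h; rewrite inE ?eqxx ?w_l' ?orbT. Qed.

Lemma letters_in_winv S w : letters_in S w -> letters_in S (winv w).
Proof. by move=> h l; rewrite /winv mem_rev => /mapP [l' /h Sl' ->]. Qed.

Lemma letters_in_pow S w n : letters_in S w -> letters_in S (word_pow w n).
Proof. by move=> h; elim: n => [|n IH] //; rewrite word_powS; apply: letters_in_cat. Qed.

Lemma N_word_cat u v : N_word N u -> N_word N v -> N_word N (u ++ v).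
Proof. exact: (letters_in_cat (S := fun x _ => N x)). Qed.

Lemma N_word_pow w n : N_word N w -> N_word N (word_pow w n).
Proof. exact: (letters_in_pow (S := fun x _ => N x)). Qed.

Lemma N_word_cons l w : N_word N (l :: w) -> N l.1.2 /\ N_word N w.
Proof. exact: (letters_in_cons (S := fun x _ => N x)). Qed.

(* Letters x ⊗ g with x outside N are not generators of N ⊗ G; [proj]
   deletes them, so that the quotients below are groups on all words. *)
Definition proj w : word G := filter (fun l => `[< N l.1.2 >]) w.

Lemma proj_cat u v : proj (u ++ v) = proj u ++ proj v.
Proof. exact: filter_cat. Qed.

Lemma proj_winv w : proj (winv w) = winv (proj w).
Proof. by rewrite /proj /winv filter_rev filter_map. Qed.

Lemma proj_N_word w : N_word N w -> proj w = w.
Proof. by move=> Nw; rewrite /proj; apply/all_filterP/allP => l /Nw /asboolP. Qed.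

Lemma N_word_proj w : N_word N (proj w).
Proof. by move=> l; rewrite mem_filter => /andP [/asboolP]. Qed.

Lemma proj_tens_eq b u v : tens_eq N b u v -> tens_eq N b (proj u) (proj v).
Proof.
have NS x g : N x -> N_word N [:: sym x g] by move=> Nx l; rewrite inE => /eqP ->.
have NS2 x g y h : N x -> N y -> N_word N [:: sym x g; sym y h].
  by move=> Nx Ny l; rewrite !inE => /orP [] /eqP ->.
elim=> {u v} [w|w1 w2 _|w1 w2 w3 _ h1 _|u u' v v' _ h1 _ h2|l|x x' g Nx Nx'|x g g' Nx|x wb Nx].
- exact: te_refl.
- exact: te_sym.
- exact: te_trans h1.
- by rewrite !proj_cat; apply: te_cat.
- rewrite /proj /=; case: `[< _ >]; first exact: te_cancel.
  exact: te_refl.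
- rewrite !proj_N_word; first exact: te_rel1.
  + by apply: NS2 => //; apply: normalJ.
  + exact/NS/(normalM nN).
- rewrite !proj_N_word; first exact: te_rel2.
  + by apply: NS2 => //; apply: normalJ.
  + exact: NS.
- by rewrite proj_N_word; [exact: te_wedge|apply: NS].
Qed.

End Words.

Section TensorModulo.
Variables (G : groupType) (N : G -> Prop) (S : G -> G -> Prop).
Hypothesis nN : is_normal_subgroup N.
Hypothesis S_commute : forall s p, letters_in S s -> N_word N p ->
  exists2 s', letters_in S s' & tens_eq N false (s ++ p) (p ++ s').

Local Notation tens_eq := (tens_eq N false).

(* The congruence of N ⊗ G modulo the subgroup generated by the letters in
   S, which S_commute makes normal. *)
Definition tens_eq_mod (u v : word G) :=
  exists2 s, letters_in S s & tens_eq (proj N u) (proj N v ++ s).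

Lemma tens_eq_mod_refl u : tens_eq_mod u u.
Proof. by exists [::]; rewrite ?cats0; [apply: letters_in_nil|apply: te_refl]. Qed.

Lemma tens_eq_mod_sym u v : tens_eq_mod u v -> tens_eq_mod v u.
Proof.
move=> [s Ss h]; exists (winv s); first exact: letters_in_winv.
apply/te_sym/(te_trans (tens_eq_catr _ h)).
rewrite -catA; apply: te_trans (tens_eq_catl _ (tens_eq_winvr _ _ _)) _.
by rewrite cats0; apply: te_refl.
Qed.

Lemma tens_eq_mod_trans u v w : tens_eq_mod u v -> tens_eq_mod v w -> tens_eq_mod u w.
Proof.
move=> [s1 S1 h1] [s2 S2 h2]; exists (s2 ++ s1); first exact: letters_in_cat.
by rewrite catA; apply: te_trans h1 (tens_eq_catr _ h2).
Qed.

Lemma tens_eq_mod_cat u u' v v' :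
  tens_eq_mod u u' -> tens_eq_mod v v' -> tens_eq_mod (u ++ v) (u' ++ v').
Proof.
move=> [s1 S1 h1] [s2 S2 h2].
have [s1' S1' h3] := S_commute S1 (N_word_proj (N:=N) (w:=v')).
exists (s1' ++ s2); first exact: letters_in_cat.
rewrite !proj_cat; apply: te_trans (te_cat h1 h2) _.
rewrite -catA (catA s1) -!catA; apply: tens_eq_catl.
by rewrite !catA; apply: tens_eq_catr.
Qed.

Lemma tens_eq_mod_proj u v : proj N u = proj N v -> tens_eq_mod u v.
Proof. by move=> e; exists [::]; rewrite ?cats0 ?e; [apply: letters_in_nil|apply: te_refl]. Qed.

Lemma tens_eq_mod_winvl u : tens_eq_mod (winv u ++ u) [::].
Proof.
exists [::]; first exact: letters_in_nil.
by rewrite proj_cat proj_winv; apply: tens_eq_winvl.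
Qed.

Lemma tens_eq_mod_winvr u : tens_eq_mod (u ++ winv u) [::].
Proof.
exists [::]; first exact: letters_in_nil.
by rewrite proj_cat proj_winv; apply: tens_eq_winvr.
Qed.

Definition tens_eq_mod_congruence : group_congruence (@cat (letter G)) [::] (@winv G) :=
  @GroupCongruence _ _ [::] _ tens_eq_mod
    tens_eq_mod_refl tens_eq_mod_sym tens_eq_mod_trans tens_eq_mod_cat
    (fun u v w => tens_eq_mod_proj (congr1 (proj N) (catA u v w)))
    tens_eq_mod_refl (fun u => tens_eq_mod_proj (congr1 (proj N) (cats0 u)))
    tens_eq_mod_winvl tens_eq_mod_winvr.

Definition tensor_mod := congr_class tens_eq_mod_congruence.
Definition tclass (w : word G) : tensor_mod := class_of tens_eq_mod_congruence w.
Definition tpair (x g : G) : tensor_mod := tclass [:: sym x g].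

Lemma tclass_cat u v : tclass (u ++ v) = tclass u * tclass v.
Proof. by rewrite /tclass -class_mulE. Qed.

Lemma tclass_cons l u : tclass (l :: u) = tclass [:: l] * tclass u.
Proof. by rewrite -tclass_cat. Qed.

Lemma tclass_winv u : tclass (winv u) = (tclass u)^-1.
Proof. by rewrite /tclass -class_invE. Qed.

Lemma tclass_pow w n : tclass (word_pow w n) = tclass w ^+ n.
Proof. by elim: n => [|n IH] //; rewrite expgS -IH -tclass_cat. Qed.

Lemma tclass_tens_eq u v : tens_eq u v -> tclass u = tclass v.
Proof.
move=> h; apply/class_of_eq; exists [::]; first exact: letters_in_nil.
by rewrite cats0; apply: proj_tens_eq.
Qed.

Lemma tclass_letter b x g : tclass [:: (b, x, g)] = if b then (tpair x g)^-1 else tpair x g.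
Proof. by case: b => //; rewrite -tclass_winv. Qed.

Lemma tclass_gen (P : G -> G -> Prop) w : letters_in P w ->
  gen_subgroup (fun s => exists x g, P x g /\ s = tpair x g) (tclass w).
Proof.
elim: w => [|[[b x] g] w IH] Pw; first exact: gs_one.
have [/= Pxg {}/IH IH] := letters_in_cons Pw.
rewrite tclass_cons tclass_letter; apply: gs_mul => //.
by case: b {Pw}; [apply: gs_inv|]; apply: gs_in; exists x, g.
Qed.

Lemma tpairMl x x' g : N x -> N x' ->
  tpair (x * x') g = tpair (lconj x x') (lconj x g) * tpair x g.
Proof. by move=> Nx Nx'; rewrite /tpair -tclass_cat; apply/tclass_tens_eq/te_rel1. Qed.

Lemma tpairMr x g g' : N x -> tpair x (g * g') = tpair x g * tpair (lconj g x) (lconj g g').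
Proof. by move=> Nx; rewrite /tpair -tclass_cat; apply/tclass_tens_eq/te_rel2. Qed.

Lemma tpair_killed x g : N x -> S x g -> tpair x g = 1.
Proof.
move=> Nx Sxg; apply/class_of_eq; exists [:: sym x g]; first by move=> l; rewrite inE => /eqP ->.
by rewrite proj_N_word /=; [apply: te_refl|move=> l; rewrite inE => /eqP ->].
Qed.

Lemma tclass_eq1 u : N_word N u -> tclass u = 1 -> exists2 s, letters_in S s & tens_eq u s.
Proof. by move=> Nu /class_of_eq [s Ss]; rewrite proj_N_word //; exists s. Qed.

End TensorModulo.

Section TensorConjugation.
Variables (G : groupType) (N : G -> Prop).
Hypothesis nN : is_normal_subgroup N.
Local Notation tens_eq := (tens_eq N false).

(* With no letter killed, tensor_mod is N ⊗ G itself. *)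
Definition no_letter (x g : G) := False.

Lemma no_letter_commute s p : letters_in no_letter s -> N_word N p ->
  exists2 s', letters_in no_letter s' & tens_eq (s ++ p) (p ++ s').
Proof.
case: s => [|l s] Ss Np; last by case: (Ss l (mem_head _ _)).
by exists [::]; rewrite ?cats0; [|apply: te_refl].
Qed.

Local Notation tclass := (tclass no_letter_commute).
Local Notation tpair := (tpair no_letter_commute).

Lemma tens_eq_tclass u v : N_word N u -> N_word N v -> tclass u = tclass v -> tens_eq u v.
Proof.
move=> Nu Nv /class_of_eq [[|l s] Ss]; last by case: (Ss l (mem_head _ _)).
by rewrite cats0 !proj_N_word.
Qed.

Definition conj_word (k : G) (s : word G) : word G :=
  map (fun l => (l.1.1, lconj k l.1.2, lconj k l.2)) s.

Lemma conj_wordM a b s : conj_word (a * b) s = conj_word a (conj_word b s).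
Proof. by rewrite /conj_word -map_comp; apply: eq_map => l /=; rewrite !lconjMg. Qed.

Lemma conj_word1 s : conj_word 1 s = s.
Proof. by rewrite /conj_word -[RHS]map_id; apply: eq_map => [[[b x] g]] /=; rewrite !lconj1g. Qed.

Lemma conj_wordK k s : conj_word k (conj_word k^-1 s) = s.
Proof. by rewrite -conj_wordM mulgV conj_word1. Qed.

Lemma letters_in_conj (S : G -> G -> Prop) k s :
  (forall x g, S x g -> S (lconj k x) (lconj k g)) ->
  letters_in S s -> letters_in S (conj_word k s).
Proof. by move=> SJ Ss l /mapP [l' /Ss Sl' ->]; apply: SJ. Qed.

Lemma N_word_conj k s : N_word N s -> N_word N (conj_word k s).
Proof. by move=> Ns l /mapP [l' /Ns Nl' ->]; apply: normalJ. Qed.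

Let tpair_conj x g y h : N x -> N y ->
  tpair x g * tpair y h = tpair (lconj (lcomm x g) y) (lconj (lcomm x g) h) * tpair x g.
Proof.
apply: (pair_conj nN) => [x1 x2 g1|x1 g1 g2]; [exact: tpairMl|exact: tpairMr].
Qed.

Lemma tpair_conj_word x g s : N x -> N_word N s ->
  tpair x g * tclass s = tclass (conj_word (lcomm x g) s) * tpair x g.
Proof.
move=> Nx; elim: s => [|[[b y] h] s IH] Ns; first by rewrite mulg1 mul1g.
have [/= Ny /IH {}IH] := N_word_cons Ns.
rewrite [tclass (_ :: s)]tclass_cons [tclass (_ :: conj_word _ s)]tclass_cons.
rewrite !tclass_letter mulgA.
case: b {Ns}.
  have -> : tpair x g * (tpair y h)^-1 =
            (tpair (lconj (lcomm x g) y) (lconj (lcomm x g) h))^-1 * tpair x g.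
    by rewrite -{2}[tpair x g](mulgK (tpair y h)) tpair_conj // -!mulgA mulKg.
  by rewrite -mulgA IH mulgA.
by rewrite tpair_conj // -mulgA IH mulgA.
Qed.

Lemma tclass_conj p s : N_word N p -> N_word N s ->
  tclass p * tclass s = tclass (conj_word (comm_eval p) s) * tclass p.
Proof.
elim: p s => [|[[b x] g] p IH] s Np Ns; first by rewrite mulg1 mul1g conj_word1.
have [/= Nx {}/IH IH] := N_word_cons Np.
rewrite tclass_cons tclass_letter -mulgA IH // !mulgA conj_wordM.
have Ns' := N_word_conj (k := comm_eval p) Ns; move: (conj_word _ s) Ns' => s' Ns'.
case: b {Np} => /=; last by rewrite tpair_conj_word.
have := tpair_conj_word g Nx (N_word_conj (k := (lcomm x g)^-1) Ns'); rewrite conj_wordK => e.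
by congr (_ * _); apply: (mulgI (tpair x g)); rewrite mulVKg mulgA e mulgK.
Qed.

Lemma conj_closed_commute (S : G -> G -> Prop) :
  (forall x g, S x g -> N x) ->
  (forall k x g, S x g -> S (lconj k x) (lconj k g)) ->
  forall s p, letters_in S s -> N_word N p ->
  exists2 s', letters_in S s' & tens_eq (s ++ p) (p ++ s').
Proof.
move=> SN SJ s p Ss Np; have Ns : N_word N s by move=> l /Ss /SN.
exists (conj_word (comm_eval p)^-1 s); first exact: letters_in_conj (SJ _) Ss.
have Ns' := N_word_conj (k := (comm_eval p)^-1) Ns.
apply: tens_eq_tclass; [exact: N_word_cat..|].
by rewrite !tclass_cat [RHS]tclass_conj // conj_wordK.
Qed.

Lemma tens_eq_trivial_letters s :
  letters_in (fun x g => N x /\ (x = 1 \/ g = 1)) s -> tens_eq s [::].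
Proof.
move=> Ts; apply: tens_eq_tclass => [l /Ts [] //|//|].
elim: s Ts => [|[[b x] g] s IH] Ts //.
have [/= [Nx xg1] {}/IH IH] := letters_in_cons Ts.
have tx : tpair x g = 1.
  case: xg1 => ->; [exact: (pair1g nN (tpairMl nN _))|exact: (pairg1 (tpairMr nN _) Nx)].
by rewrite tclass_cons IH mulg1 tclass_letter tx; case: b {Ts}; rewrite ?invg1.
Qed.

End TensorConjugation.

Section DerivedSeries.
Variables (G : groupType) (N : G -> Prop).
Hypothesis nN : is_normal_subgroup N.

Lemma comm_subgroup_normal (K : G -> Prop) :
  is_normal_subgroup K -> is_normal_subgroup (comm_subgroup K).
Proof.
move=> nK; split=> [|x y|x|g x]; [exact: gs_one|exact: gs_mul|exact: gs_inv|].
elim=> {x} [|_ [a [b [Ka Kb ->]]]|x y _ Jx _ Jy|x _ Jx].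
- by rewrite lconjg1; apply: gs_one.
- rewrite lconj_lcomm; apply: gs_in; exists (lconj g a), (lconj g b).
  by split=> //; apply: normalJ.
- by rewrite lconjgM; apply: gs_mul.
- by rewrite lconjgV; apply: gs_inv.
Qed.

Lemma comm_subgroup_sub (K : G -> Prop) x :
  is_normal_subgroup K -> comm_subgroup K x -> K x.
Proof.
move=> nK; elim=> {x} [|_ [a [b [Ka Kb ->]]]|x y _ Kx _ Ky|x _ Kx].
- exact: normal1 nK.
- by apply: (normal_lcomm nK); left.
- exact: normalM.
- exact: normalV.
Qed.

Lemma derived_normal k : is_normal_subgroup (derived N k).
Proof. by elim: k => [|k IH] //=; apply: comm_subgroup_normal. Qed.

Lemma derived_sub k x : derived N k x -> N x.
Proof.
elim: k x => [|k IH] x //= /comm_subgroup_sub Dx.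
exact/IH/Dx/derived_normal.
Qed.

Lemma derived_lcomm k a b :
  derived N k a -> derived N k b -> derived N k.+1 (lcomm a b).
Proof. by move=> Da Db; apply: gs_in; exists a, b. Qed.

End DerivedSeries.

Section TensorExponent.
Variables (G : groupType) (N : G -> Prop) (e : nat).
Hypothesis nN : is_normal_subgroup N.
Hypothesis expN : forall x, N x -> x ^+ e = 1.
Local Notation tens_eq := (tens_eq N false).
Local Notation c := (double_if_even e).

Definition derived_letter k (x g : G) := N x /\ (derived N k x \/ derived N k g).

Lemma derived_letterJ k k' x g :
  derived_letter k x g -> derived_letter k (lconj k' x) (lconj k' g).
Proof.
move=> [Nx Dxg]; split; first exact: normalJ.
by case: Dxg => D; [left|right]; apply: (normalJ (derived_normal nN k)).
Qed.

Lemma word_pow_derived_step k w : letters_in (derived_letter k) w ->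
  exists2 s, letters_in (derived_letter k.+1) s & tens_eq (word_pow w c) s.
Proof.
move=> Dw; have Nw : N_word N w by move=> l /Dw [].
have S_commute := conj_closed_commute nN (fun x g => @proj1 _ _) (@derived_letterJ k.+1).
apply: (tclass_eq1 (S_commute := S_commute)); first exact: N_word_pow.
have killed x g : N x -> derived N k.+1 x \/ derived N k.+1 g -> tpair S_commute x g = 1.
  by move=> Nx Dxg; apply: tpair_killed.
have expD a : derived N k a -> a ^+ e = 1 by move/(derived_sub nN)/expN.
rewrite tclass_pow; apply: (gen_Apair_exponent nN (tpairMl nN S_commute)
  (tpairMr nN S_commute) (@derived_sub _ _ nN k.+1) killed (derived_normal nN k)
  (@derived_sub _ _ nN k) (@derived_lcomm _ _ k) expD).
by apply: gen_subgroup_sub (tclass_gen S_commute Dw) => _ [x [g [[Nx Dxg] ->]]]; exists x, g.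
Qed.

Lemma word_pow_derived k w : N_word N w ->
  exists2 s, letters_in (derived_letter k) s & tens_eq (word_pow w (c ^ k)) s.
Proof.
move=> Nw; elim: k => [|k [s Ds ws]].
  exists w; first by move=> l /Nw Nl; split=> //; left.
  by rewrite word_powS cats0; apply: te_refl.
have [s' Ds' ss'] := word_pow_derived_step Ds.
by exists s' => //; rewrite expnSr word_powM; apply: te_trans (tens_eq_pow _ ws) ss'.
Qed.

Lemma tensor_exp_dvd_derived d :
  (forall x, derived N d x -> x = 1) -> tensor_exp_dvd N (c ^ d).
Proof.
move=> trivD w Nw; have [s Ds ws] := word_pow_derived d Nw.
apply: te_trans ws (tens_eq_trivial_letters nN _).
by move=> l /Ds [Nx [/trivD|/trivD]]; split=> //; [left|right].
Qed.

End TensorExponent.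

Theorem lemma6p4 (G : groupType) (N : G -> Prop) (d e : nat) :
  is_normal_subgroup N -> derived_length N d -> exponent_is N e ->
  (odd e ->
     tensor_exp_dvd N (e ^ d) /\ rel_schur_exp_dvd N (e ^ d)) /\
  (~~ odd e ->
     tensor_exp_dvd N (2 ^ d * e ^ d) /\ rel_schur_exp_dvd N (2 ^ d * e ^ d)).
Proof.
move=> nN [trivD _] [_ expN _].
have tens := tensor_exp_dvd_derived nN expN trivD.
have wedge : rel_schur_exp_dvd N (double_if_even e ^ d).
  by move=> w Nw _; apply/tens_eq_wedge/tens.
rewrite /double_if_even in tens wedge; split=> oe; first by rewrite oe in tens wedge.
by rewrite (negbTE oe) expnMn in tens wedge.
Qed.
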